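(* Let $y\in\mathbb R^n$, let $X\in\mathbb R^{n\times p}$ have nonzero columns $x_1,\dots,x_p$, and let $\sigma^2>0$ be fixed. Then the maximization problem $\operatorname{Argmax}_{\gamma\in[0,\infty)^p}\ell(\sigma^2,\gamma)$ has at least one solution $\hat\gamma=(\hat\gamma_1,\ldots,\hat\gamma_p)$, and it can be chosen with the following property: for every $j\in\{1,\dots,p\}$, \[ \hat\gamma_{j}=\begin{cases}\dfrac{\left(x_j'C_j^{-1}y\right)^2-x_j'C_j^{-1}x_j}{\left(x_j'C_j^{-1}x_j\right)^2} & \text{if } \left(x_j'C_j^{-1}y\right)^2> x_j'C_j^{-1}x_j,\\[2mm] 0 &\text{otherwise},\end{cases} \] where \[C_j= \sigma^2 I_n +\sum_{k\in I_{\hat\gamma}\setminus\{j\}}\hat\gamma_{k}x_kx_k',\qquad I_{\hat\gamma}=\{k:\hat\gamma_k\neq 0\}.\]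
   Context: No probabilistic assumptions are made here: $y$ and $X$ are fixed. For $\gamma\in\Theta=[0,\infty)^p$ let $I_\gamma=\{1\le j\le p:\gamma_j\neq 0\}$ and $C_\gamma=\sigma^2 I_n+\sum_{j\in I_\gamma}\gamma_j x_jx_j'$, where $I_n$ is the $n\times n$ identity. The (marginal, type-II) log-likelihood is $\ell(\sigma^2,\gamma)=-\tfrac12\log\det(C_\gamma)-\tfrac12\operatorname{Tr}(C_\gamma^{-1}yy')$. It is the log-likelihood of $y\sim N(0,C_\gamma)$, arising from the model $y\sim N(X\beta,\sigma^2 I_n)$ with independent priors $\beta_j\sim N(0,\gamma_j)$, where $N(0,0)$ denotes the point mass at $0$. *)

From HB Require Import structures.
From Stdlib Require Import Reals Lra ClassicalEpsilon FunctionalExtensionality.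
From mathcomp Require Import all_boot all_order all_algebra.

Set Implicit Arguments.
Unset Strict Implicit.
Unset Printing Implicit Defensive.

Import GRing.Theory.

Local Open Scope R_scope.

Definition R_eqb (x y : R) : bool := if Req_EM_T x y then true else false.

Lemma R_eqP : Equality.axiom R_eqb.
Proof. by move=> x y; rewrite /R_eqb; case: Req_EM_T => h; constructor. Qed.

HB.instance Definition _ := hasDecEq.Build R R_eqP.

Definition R_find (P : pred R) (n : nat) : option R :=
  match excluded_middle_informative (exists x, P x) with
  | left h => Some (proj1_sig (constructive_indefinite_description _ h))
  | right _ => None
  end.

Lemma R_find_correct P n x : R_find P n = Some x -> P x.
Proof.
rewrite /R_find; case: excluded_middle_informative => // h [<-].
exact: proj2_sig (constructive_indefinite_description _ h).
Qed.

Lemma R_find_complete (P : pred R) : (exists x, P x) -> exists n, R_find P n.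
Proof. by move=> h; exists 0%N; rewrite /R_find; case: excluded_middle_informative. Qed.

Lemma R_find_ext (P Q : pred R) : P =1 Q -> R_find P =1 R_find Q.
Proof. by move=> /functional_extensionality ->. Qed.

HB.instance Definition _ :=
  hasChoice.Build R R_find_correct R_find_complete R_find_ext.

Lemma R_addA : associative Rplus. Proof. by move=> *; rewrite Rplus_assoc. Qed.
Lemma R_addC : commutative Rplus. Proof. by move=> *; rewrite Rplus_comm. Qed.
Lemma R_add0 : left_id (0:R) Rplus. Proof. by move=> *; rewrite Rplus_0_l. Qed.
Lemma R_addN : left_inverse (0:R) Ropp Rplus. Proof. by move=> *; rewrite Rplus_opp_l. Qed.

HB.instance Definition _ := GRing.isZmodule.Build R R_addA R_addC R_add0 R_addN.

Lemma R_mulA : associative Rmult. Proof. by move=> *; rewrite Rmult_assoc. Qed.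
Lemma R_mulC : commutative Rmult. Proof. by move=> *; rewrite Rmult_comm. Qed.
Lemma R_mul1 : left_id (1:R) Rmult. Proof. by move=> *; rewrite Rmult_1_l. Qed.
Lemma R_mulDl : left_distributive Rmult Rplus.
Proof. by move=> *; rewrite Rmult_plus_distr_r. Qed.
Lemma R_one_neq0 : ((1:R) : R) != (0:R).
Proof. by apply/eqP; exact: R1_neq_R0. Qed.

HB.instance Definition _ :=
  GRing.Zmodule_isComNzRing.Build R R_mulA R_mulC R_mul1 R_mulDl R_one_neq0.

Definition R_inv (x : R) : R := if Req_EM_T x 0 then (0:R) else Rinv x.

Lemma R_mulVf (x : R) : x != 0 -> R_inv x * x = 1.
Proof.
move=> hx; unfold R_inv; destruct (Req_EM_T x 0) as [h|h].
  by rewrite h eqxx in hx.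
exact: Rinv_l.
Qed.

Lemma R_inv0 : R_inv 0 = 0.
Proof. unfold R_inv; destruct (Req_EM_T 0 0); [reflexivity|contradiction]. Qed.

HB.instance Definition _ := GRing.ComNzRing_isField.Build R R_mulVf R_inv0.

Local Close Scope R_scope.
Local Open Scope ring_scope.

Definition Cgamma (n p : nat) (s2 : R) (X : 'M[R]_(n, p)) (g : 'I_p -> R)
  : 'M[R]_n :=
  s2%:M + \sum_(j < p | g j != 0) g j *: (col j X *m (col j X)^T).

Definition Cminus (n p : nat) (s2 : R) (X : 'M[R]_(n, p)) (g : 'I_p -> R)
  (j : 'I_p) : 'M[R]_n :=
  s2%:M + \sum_(k < p | (g k != 0) && (k != j)) g k *: (col k X *m (col k X)^T).

Definition loglik (n p : nat) (y : 'cV[R]_n) (X : 'M[R]_(n, p)) (s2 : R)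
  (g : 'I_p -> R) : R :=
  - (1 / 2) * ln (\det (Cgamma s2 X g))
  - (1 / 2) * \tr (invmx (Cgamma s2 X g) *m (y *m y^T)).

Definition in_Theta (p : nat) (g : 'I_p -> R) : Prop :=
  forall j, Rle 0 (g j).

Definition is_argmax (n p : nat) (y : 'cV[R]_n) (X : 'M[R]_(n, p)) (s2 : R)
  (g : 'I_p -> R) : Prop :=
  in_Theta g /\ forall g', in_Theta g' -> Rle (loglik y X s2 g') (loglik y X s2 g).

Definition qy (n p : nat) (y : 'cV[R]_n) (X : 'M[R]_(n, p)) (s2 : R)
  (g : 'I_p -> R) (j : 'I_p) : R :=
  ((col j X)^T *m invmx (Cminus s2 X g j) *m y) 0 0.

Definition qx (n p : nat) (X : 'M[R]_(n, p)) (s2 : R)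
  (g : 'I_p -> R) (j : 'I_p) : R :=
  ((col j X)^T *m invmx (Cminus s2 X g j) *m col j X) 0 0.

From HB Require Import structures.
From Stdlib Require Import Reals Lra Lia ClassicalEpsilon FunctionalExtensionality.
From Coquelicot Require Import Rcomplements Rbar Hierarchy Lim_seq ElemFct Continuity.
From mathcomp Require Import all_boot all_order all_algebra.
Import GRing.Theory.

(* When all coordinates but [j] are fixed, [C_gamma = C_j + gamma_j x_j x_j'],
   and the matrix determinant lemma and the Sherman-Morrison formula show that the
   log-likelihood, as a function of [gamma_j >= 0], is a constant plus
   [(- ln (1 + gamma_j a) + gamma_j b^2 / (1 + gamma_j a)) / 2] with
   [a = x_j' C_j^-1 x_j > 0] and [b = x_j' C_j^-1 y].  This function of [gamma_j] has
   the unique maximiser given in the statement, so every maximiser of the likelihood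
   satisfies the fixed-point equations.  A maximiser exists: the likelihood is bounded
   above by [- ln (det C_gamma) / 2 <= - ln (s2 ^ n) / 2], the bound
   [det C_gamma >= s2 ^ n * (1 + gamma_j * x_j' x_j / s2)] confines each coordinate on
   a superlevel set, and the likelihood is continuous, so a maximising sequence has a
   convergent subsequence (Bolzano-Weierstrass) whose limit is a maximiser. *)

Set Implicit Arguments.
Unset Strict Implicit.
Unset Printing Implicit Defensive.

Section Profile.
Local Open Scope R_scope.

Lemma ln_lt_sub1 z : 0 < z -> z <> 1 -> ln z < z - 1.
Proof.
move=> z_gt0 z_neq1; have ln_neq0 : ln z <> 0.
  by move=> e; apply: z_neq1; rewrite -(exp_ln z z_gt0) e exp_0.
by have := exp_ineq1 _ ln_neq0; rewrite exp_ln //; lra.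
Qed.

Lemma neg_ln_add_inv_lt_max k u : 0 <= k -> 1 <= u -> u <> Rmax k 1 ->
  - ln u + k * (1 - / u) < - ln (Rmax k 1) + k * (1 - / Rmax k 1).
Proof.
move=> k_ge0 u_ge1; rewrite /Rmax; case: Rle_dec => [k_le1|k_gt1] u_neq.
- rewrite ln_1 Rinv_1.
  have u_inv_neq1 : / u <> 1 by move=> e; apply: u_neq; rewrite -(Rinv_inv u) e Rinv_1.
  have := ln_lt_sub1 (Rinv_0_lt_compat u ltac:(lra)) u_inv_neq1.
  rewrite ln_Rinv; last lra.
  have : / u <= 1 by rewrite -Rinv_1; apply: Rinv_le_contravar; lra.
  by nra.
- have ku_gt0 : 0 < k / u by apply: Rdiv_lt_0_compat; lra.
  have ku_neq1 : k / u <> 1.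
    move=> e; apply: u_neq; have ke : k = k / u * u by field; lra.
    by rewrite e Rmult_1_l in ke.
  have := ln_lt_sub1 ku_gt0 ku_neq1.
  rewrite /Rdiv ln_mult ?ln_Rinv; try lra; last by apply: Rinv_0_lt_compat; lra.
  have -> : k * (1 - / k) = k - 1 by field; lra.
  have -> : k * (1 - / u) = k - k * / u by field; lra.
  lra.
Qed.

Definition profile (a c t : R) : R := - ln (1 + t * a) + t / (1 + t * a) * c.

(* In the variable [u = 1 + t * a >= 1] the profile is [- ln u + c / a * (1 - / u)],
   which is uniquely maximised at [u = Rmax (c / a) 1]. *)
Lemma profile_argmax a c t0 : 0 < a -> 0 <= c -> 0 <= t0 ->
  (forall t, 0 <= t -> profile a c t <= profile a c t0) ->
  t0 = if Rlt_dec a c then (c - a) / (a * a) else 0.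
Proof.
move=> a_gt0 c_ge0 t0_ge0 t0_max.
set ts := if Rlt_dec a c then _ else _.
have profileE t : 0 <= t -> profile a c t = - ln (1 + t * a) + c / a * (1 - / (1 + t * a)).
  by move=> t_ge0; rewrite /profile; field; nra.
have ts_ge0 : 0 <= ts.
  rewrite /ts; case: Rlt_dec => ac /=; last lra.
  by apply: Rmult_le_pos; [lra | left; apply: Rinv_0_lt_compat; nra].
have ts_max : 1 + ts * a = Rmax (c / a) 1.
  have ca_a : c / a * a = c by field; lra.
  rewrite /ts /Rmax; case: Rlt_dec => ac; case: Rle_dec => ca1 /=; try nra.
  by field; lra.
apply: NNPP => t0_neq.
have u0_neq : 1 + t0 * a <> Rmax (c / a) 1.
  by rewrite -ts_max => e; apply: t0_neq; apply: (Rmult_eq_reg_r a); lra.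
have ca_ge0 : 0 <= c / a by apply: Rmult_le_pos; [lra | left; exact: Rinv_0_lt_compat].
have u0_ge1 : 1 <= 1 + t0 * a by nra.
have := neg_ln_add_inv_lt_max ca_ge0 u0_ge1 u0_neq.
have := t0_max ts ts_ge0; rewrite !profileE // ts_max.
lra.
Qed.

End Profile.

Local Open Scope ring_scope.

Definition bform (F : fieldType) n (A : 'M[F]_n) (u v : 'cV[F]_n) : F :=
  (u^T *m A *m v) 0 0.

Section RankOneUpdate.
Variables (F : fieldType) (n : nat).
Implicit Types (A B : 'M[F]_n) (u v w x : 'cV[F]_n).

Lemma bformD A B u v : bform (A + B) u v = bform A u v + bform B u v.
Proof. by rewrite /bform mulmxDr mulmxDl mxE. Qed.

Lemma bformB A B u v : bform (A - B) u v = bform A u v - bform B u v.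
Proof. by rewrite /bform mulmxBr mulmxBl !mxE. Qed.

Lemma bformZ c A u v : bform (c *: A) u v = c * bform A u v.
Proof. by rewrite /bform -scalemxAr -scalemxAl mxE. Qed.

Lemma tr_mul11 u v : (u^T *m v) 0 0 = (v^T *m u) 0 0.
Proof. by rewrite -[v^T *m u]trmxK trmx_mul trmxK [RHS]mxE. Qed.

Lemma bform_rank1 a b u v : bform (u *m v^T) a b = (u^T *m a) 0 0 * (v^T *m b) 0 0.
Proof.
by rewrite /bform mulmxA -(mulmxA (a^T *m u)) mxE big_ord1 (tr_mul11 a u).
Qed.

Lemma mxtrace_mul_rank1 B v : \tr (B *m (v *m v^T)) = bform B v v.
Proof. by rewrite mulmxA mxtrace_mulC /bform mulmxA /mxtrace big_ord1. Qed.

Lemma det_add1_rank1 u (w : 'rV[F]_n) : \det (1%:M + u *m w) = 1 + (w *m u) 0 0.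
Proof.
(* [P] and [U] are block triangular with the two sides of the identity as
   diagonal blocks, and [L] is unitriangular. *)
pose P := block_mx (1%:M + u *m w) u (0 : 'M_(1, n)) (1%:M : 'M_1).
pose L := block_mx (1%:M : 'M_n) (0 : 'M_(n, 1)) (- w) (1%:M : 'M_1).
pose U := block_mx (1%:M : 'M_n) u (0 : 'M_(1, n)) (1%:M + w *m u : 'M_1).
have PL_LU : P *m L = L *m U.
  rewrite /P /L /U !mulmx_block !mulmx1 !mul1mx !mulmx0 !mul0mx !addr0 !add0r.
  by rewrite mulmxN mulNmx addrK addrCA addNr addr0.
have := congr1 determinant PL_LU.
rewrite !det_mulmx /P /L /U !det_ublock !det_lblock !det1 !mulr1 !mul1r.
by rewrite det_mx11 !mxE eqxx mulr1n.
Qed.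

Lemma det_add_rank1 A x t : A \in unitmx ->
  \det (A + t *: (x *m x^T)) = \det A * (1 + t * bform (invmx A) x x).
Proof.
move=> A_unit.
have -> : A + t *: (x *m x^T) = A *m (1%:M + (invmx A *m (t *: x)) *m x^T).
  by rewrite mulmxDr mulmx1 mulmxA mulKVmx // scalemxAl.
by rewrite det_mulmx det_add1_rank1 /bform -!scalemxAr mxE mulmxA.
Qed.

Lemma invmx_add_rank1 A x t : A \in unitmx -> A^T = A ->
  1 + t * bform (invmx A) x x != 0 ->
  invmx (A + t *: (x *m x^T)) =
  invmx A - (t / (1 + t * bform (invmx A) x x)) *: (invmx A *m x *m (invmx A *m x)^T).
Proof.
move=> A_unit A_sym d_neq0.
set a := bform _ x x; set s := t / (1 + t * a); set u := invmx A *m x.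
have uT : u^T = x^T *m invmx A by rewrite /u trmx_mul trmx_inv A_sym.
have xTu : x^T *m u = a%:M by rewrite /u mulmxA [LHS]mx11_scalar.
have st : t - s * (t * a) = s.
  by rewrite -{1}(mulfVK d_neq0 t) -/s mulrDr mulr1 addrK.
have AuuT : A *m (u *m u^T) = x *m u^T by rewrite mulmxA mulKVmx.
have xxTA : x *m x^T *m invmx A = x *m u^T by rewrite -mulmxA -uT.
have xxTuuT : x *m x^T *m (u *m u^T) = a *: (x *m u^T).
  by rewrite mulmxA -(mulmxA x) xTu mul_mx_scalar scalemxAl.
have inv_right : (A + t *: (x *m x^T)) *m (invmx A - s *: (u *m u^T)) = 1%:M.
  rewrite mulmxDl !mulmxBr mulmxV // -!scalemxAr -!scalemxAl AuuT xxTA xxTuuT.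
  by rewrite !scalerA -scalerBl -mulrA st addrNK.
have C_unit : A + t *: (x *m x^T) \in unitmx by case: (mulmx1_unit inv_right).
by rewrite -[RHS](mulKmx C_unit) inv_right mulmx1.
Qed.

Lemma bform_invmx_add_rank1 A x v t : A \in unitmx -> A^T = A ->
  1 + t * bform (invmx A) x x != 0 ->
  bform (invmx (A + t *: (x *m x^T))) v v =
  bform (invmx A) v v - t / (1 + t * bform (invmx A) x x) * bform (invmx A) x v ^+ 2.
Proof.
move=> A_unit A_sym d_neq0; rewrite invmx_add_rank1 // bformB bformZ bform_rank1.
by rewrite trmx_mul trmx_inv A_sym expr2.
Qed.

End RankOneUpdate.

(* [lra], [nra] and [field] only recognise the Stdlib operations on [R]. *)
Lemma addRE (x y : R) : x + y = Rplus x y. Proof. by []. Qed.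
Lemma mulRE (x y : R) : x * y = Rmult x y. Proof. by []. Qed.
Lemma oppRE (x : R) : - x = Ropp x. Proof. by []. Qed.
Lemma oneRE : 1 = IZR 1. Proof. by []. Qed.

Lemma invRE (x : R) : x != 0 -> x^-1 = Rinv x.
Proof. by move=> /eqP x_neq0; rewrite /GRing.inv /= /R_inv; case: Req_EM_T. Qed.

Lemma sumsq_ge0 (I : finType) (P : pred I) (f : I -> R) :
  Rle 0 (\sum_(i | P i) f i * f i).
Proof.
apply: (big_ind (Rle 0)) => [|a b a_ge0 b_ge0|i _].
- exact: Rle_refl.
- by rewrite addRE; lra.
- exact: Rle_0_sqr.
Qed.

Lemma sumsq_gt0 (I : finType) (f : I -> R) i : f i <> 0 -> Rlt 0 (\sum_i f i * f i).
Proof.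
move=> fi_neq0; rewrite (bigD1 i) //= addRE mulRE.
exact: Rplus_lt_le_0_compat (Rsqr_pos_lt _ fi_neq0) (sumsq_ge0 (predC1 i) f).
Qed.

Section PositiveDefinite.
Variable n : nat.
Implicit Types (A : 'M[R]_n) (v x : 'cV[R]_n).

Definition posdef A := forall v, v != 0 -> Rlt 0 (bform A v v).

Lemma posdef_scalar s : Rlt 0 s -> posdef s%:M.
Proof.
move=> s_gt0 v /eqP v_neq0.
have [i vi_neq0] : exists i, v i 0 <> 0.
  apply: NNPP => v_eq0; apply: v_neq0; apply/matrixP => i j.
  by rewrite ord1 mxE; apply: NNPP => vi_neq0; apply: v_eq0; exists i.
have -> : bform s%:M v v = s * \sum_i v i 0 * v i 0.
  rewrite /bform mul_mx_scalar -scalemxAl !mxE; congr (_ * _).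
  by apply: eq_bigr => k _; rewrite mxE.
rewrite mulRE; exact: Rmult_lt_0_compat s_gt0 (@sumsq_gt0 _ (fun k => v k 0) i vi_neq0).
Qed.

Lemma posdef_ge0 A v : posdef A -> Rle 0 (bform A v v).
Proof.
move=> A_pd; have [->|v_neq0] := eqVneq v 0; last by left; apply: A_pd.
by rewrite /bform trmx0 !mul0mx mxE; exact: Rle_refl.
Qed.

Lemma posdef_add_rank1 A x t : posdef A -> Rle 0 t -> posdef (A + t *: (x *m x^T)).
Proof.
move=> A_pd t_ge0 v v_neq0; rewrite bformD bformZ bform_rank1 tr_mul11 addRE !mulRE.
by have := A_pd v v_neq0; nra.
Qed.

Lemma posdef_unit A : posdef A -> A \in unitmx.
Proof.
move=> A_pd; rewrite unitmxE unitfE; apply/negP => /det0P [w w_neq0 wA].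
have wT_neq0 : w^T != 0 by rewrite -trmx0 (inj_eq trmx_inj).
by have := A_pd _ wT_neq0; rewrite /bform trmxK wA mul0mx mxE; exact: Rlt_irrefl.
Qed.

Lemma posdef_invmx A : A^T = A -> posdef A -> posdef (invmx A).
Proof.
move=> A_sym A_pd v v_neq0; have A_unit := posdef_unit A_pd.
have Av_neq0 : invmx A *m v != 0.
  by apply: contra v_neq0 => /eqP Av0; rewrite -(mulKVmx A_unit v) Av0 mulmx0.
have := A_pd _ Av_neq0.
by rewrite /bform trmx_mul trmx_inv A_sym -!mulmxA mulKVmx.
Qed.

(* Positivity of the determinant follows from positive definiteness, but it is
   simpler to carry it along the rank-one updates that build the matrices. *)
Definition spd A := [/\ A^T = A, posdef A & Rlt 0 (\det A)].

Lemma spd_scalar s : Rlt 0 s -> spd s%:M.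
Proof.
move=> s_gt0; split; [exact: tr_scalar_mx | exact: posdef_scalar |].
rewrite det_scalar; elim: n => [|m IHm]; first exact: Rlt_0_1.
by rewrite exprS mulRE; apply: Rmult_lt_0_compat.
Qed.

Lemma spd_add_rank1 A x t : spd A -> Rle 0 t ->
  spd (A + t *: (x *m x^T)) /\ Rle (\det A) (\det (A + t *: (x *m x^T))).
Proof.
move=> [A_sym A_pd detA_gt0] t_ge0.
have q_ge0 := posdef_ge0 x (posdef_invmx A_sym A_pd).
have := det_add_rank1 x t (posdef_unit A_pd).
(* [set] merges occurrences differing only in their structure instances,
   which [nra] would otherwise treat as distinct atoms. *)
set d := \det A in detA_gt0 *; set q := bform _ x x in q_ge0 *.
rewrite !addRE !mulRE oneRE => det_eq.
have tq_ge0 := Rmult_le_pos _ _ t_ge0 q_ge0.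
split; [split|]; rewrite ?det_eq; try nra.
- by rewrite linearD /= linearZ /= trmx_mul trmxK A_sym.
- exact: posdef_add_rank1.
Qed.

Lemma spd_add_sum_rank1 (I : finType) (P : pred I) (g : I -> R) (x : I -> 'cV_n) A :
  spd A -> (forall k, Rle 0 (g k)) ->
  spd (A + \sum_(k | P k) g k *: (x k *m (x k)^T)) /\
  Rle (\det A) (\det (A + \sum_(k | P k) g k *: (x k *m (x k)^T))).
Proof.
move=> A_spd g_ge0.
apply: (big_rec (fun S => spd (A + S) /\ Rle (\det A) (\det (A + S)))).
  by rewrite addr0; split=> //; exact: Rle_refl.
move=> k S _ [AS_spd detA_le]; rewrite addrCA addrC.
have [ASk_spd detAS_le] := spd_add_rank1 (x k) AS_spd (g_ge0 k).
by split=> //; exact: Rle_trans detA_le detAS_le.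
Qed.

End PositiveDefinite.

Section Model.
Variables (n p : nat) (y : 'cV[R]_n) (X : 'M[R]_(n, p)) (s2 : R).
Local Notation xxT j := (col j X *m (col j X)^T).
Local Notation upd g j t := (@dfwith _ (fun=> R) g j t).
Implicit Types (g : 'I_p -> R) (j : 'I_p).

Lemma Cgamma_sum g : Cgamma s2 X g = s2%:M + \sum_j g j *: xxT j.
Proof.
rewrite /Cgamma [in RHS](bigID (fun j => g j != 0)) /=.
rewrite [Z in _ = _ + (_ + Z)]big1 ?addr0 //.
by move=> j /negPn/eqP ->; rewrite scale0r.
Qed.

Lemma Cminus_sum g j : Cminus s2 X g j = s2%:M + \sum_(k | k != j) g k *: xxT k.
Proof.
rewrite /Cminus [in RHS](bigID (fun k => g k != 0)) /= [Z in _ = _ + (_ + Z)]big1 ?addr0.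
  by under [in RHS]eq_bigl do rewrite andbC.
by move=> k /andP [_ /negPn/eqP ->]; rewrite scale0r.
Qed.

Lemma Cgamma_dfwith g j t : Cgamma s2 X (upd g j t) = Cminus s2 X g j + t *: xxT j.
Proof.
rewrite Cgamma_sum Cminus_sum (bigD1 j) //= dfwith_in [t *: _ + _]addrC addrA.
congr (_ + _ + _); apply: eq_bigr => k k_neq_j.
by rewrite dfwith_out // eq_sym.
Qed.

Lemma dfwith_self g j : upd g j (g j) = g.
Proof. by apply: functional_extensionality => k; case: dfwithP. Qed.

Lemma in_Theta_dfwith g j t : in_Theta g -> Rle 0 t -> in_Theta (upd g j t).
Proof. by move=> g_ge0 t_ge0 k; case: dfwithP. Qed.

Hypothesis s2_gt0 : Rlt 0 s2.

Lemma spd_Cgamma g : in_Theta g -> spd (Cgamma s2 X g).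
Proof.
move=> g_ge0; rewrite Cgamma_sum.
by case: (spd_add_sum_rank1 predT (fun k => col k X) (spd_scalar n s2_gt0) g_ge0).
Qed.

Lemma spd_Cminus g j : in_Theta g -> spd (Cminus s2 X g j).
Proof.
move=> g_ge0; rewrite Cminus_sum.
by case: (spd_add_sum_rank1 (predC1 j) (fun k => col k X) (spd_scalar n s2_gt0) g_ge0).
Qed.

Lemma qx_ge0 g j : in_Theta g -> Rle 0 (qx X s2 g j).
Proof.
by move=> /(spd_Cminus j) [C_sym C_pd _]; exact: posdef_ge0 (posdef_invmx C_sym C_pd).
Qed.

Lemma qxE g j : qx X s2 g j = bform (invmx (Cminus s2 X g j)) (col j X) (col j X).
Proof. by []. Qed.

Lemma qyE g j : qy y X s2 g j = bform (invmx (Cminus s2 X g j)) (col j X) y.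
Proof. by []. Qed.

Section CoordinateProfile.
Local Open Scope R_scope.

Lemma loglik_dfwith g j t : in_Theta g -> Rle 0 t ->
  loglik y X s2 (upd g j t) =
  - (1 / 2) * ln (\det (Cminus s2 X g j)) - (1 / 2) * bform (invmx (Cminus s2 X g j)) y y
   + (1 / 2) * profile (qx X s2 g j) (qy y X s2 g j ^+ 2) t.
Proof.
move=> g_ge0 t_ge0; have [C_sym C_pd detC_gt0] := spd_Cminus j g_ge0.
have := qx_ge0 j g_ge0; rewrite qxE qyE => a_ge0.
have u_gt0 : Rlt 0 (1 + t * bform (invmx (Cminus s2 X g j)) (col j X) (col j X)).
  by have := Rmult_le_pos _ _ t_ge0 a_ge0; lra.
have u_neq0 : 1 + t * bform (invmx (Cminus s2 X g j)) (col j X) (col j X) != 0.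
  by apply/eqP; exact: Rgt_not_eq.
have C_unit := posdef_unit C_pd.
rewrite /loglik Cgamma_dfwith det_add_rank1 // mxtrace_mul_rank1 bform_invmx_add_rank1 //.
rewrite ln_mult // (invRE u_neq0) /profile !addRE !mulRE !oppRE oneRE.
set D := \det _; set a := bform _ _ (col j X); set c := _ ^+ 2; set B := bform _ y y.
by field; apply: Rgt_not_eq.
Qed.

End CoordinateProfile.

Lemma argmax_coord g j : is_argmax y X s2 g -> col j X <> 0 ->
  g j = (if Rlt_dec (qx X s2 g j) (qy y X s2 g j ^+ 2)
         then (qy y X s2 g j ^+ 2 - qx X s2 g j) / (qx X s2 g j ^+ 2)
         else 0).
Proof.
move=> [g_ge0 g_max] xj_neq0; have [C_sym C_pd _] := spd_Cminus j g_ge0.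
have a_gt0 : Rlt 0 (qx X s2 g j) by apply: (posdef_invmx C_sym C_pd); apply/eqP.
have c_ge0 : Rle 0 (qy y X s2 g j ^+ 2) by rewrite expr2 mulRE; exact: Rle_0_sqr.
have gj_max t : Rle 0 t ->
    Rle (profile (qx X s2 g j) (qy y X s2 g j ^+ 2) t)
        (profile (qx X s2 g j) (qy y X s2 g j ^+ 2) (g j)).
  move=> t_ge0; have := g_max _ (in_Theta_dfwith j g_ge0 t_ge0).
  by rewrite -{2}(dfwith_self g j) !loglik_dfwith //; lra.
rewrite {1}(profile_argmax a_gt0 c_ge0 (g_ge0 j) gj_max); case: Rlt_dec => //= _.
by rewrite expr2 invRE // mulf_neq0 //; apply/eqP; exact: Rgt_not_eq.
Qed.

End Model.

Lemma is_lim_seq_big (I : Type) (r : seq I) (P : pred I) (op : R -> R -> R) (idx : R)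
    (F : nat -> I -> R) (L : I -> R) :
  (forall u v (a b : R), is_lim_seq u a -> is_lim_seq v b ->
     is_lim_seq (fun m => op (u m) (v m)) (op a b)) ->
  (forall i, is_lim_seq (F^~ i) (L i)) ->
  is_lim_seq (fun m => \big[op/idx]_(i <- r | P i) F m i) (\big[op/idx]_(i <- r | P i) L i).
Proof.
move=> op_lim F_lim; elim: r => [|i r IHr].
  rewrite big_nil; apply: (is_lim_seq_ext (fun=> idx)); last exact: is_lim_seq_const.
  by move=> m; rewrite big_nil.
rewrite big_cons; case: ifP => Pi.
  apply: (is_lim_seq_ext (fun m => op (F m i) (\big[op/idx]_(j <- r | P j) F m j))).
    by move=> m; rewrite big_cons Pi.
  exact: op_lim (F_lim i) IHr.
by apply: (is_lim_seq_ext _ _ _ _ IHr) => m; rewrite big_cons Pi.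
Qed.

Lemma is_lim_seq_sum (I : Type) (r : seq I) (P : pred I) (F : nat -> I -> R) (L : I -> R) :
  (forall i, is_lim_seq (F^~ i) (L i)) ->
  is_lim_seq (fun m => \sum_(i <- r | P i) F m i) (\sum_(i <- r | P i) L i).
Proof.
by apply: is_lim_seq_big => u v a b u_lim v_lim; exact (is_lim_seq_plus' _ _ _ _ u_lim v_lim).
Qed.

Lemma is_lim_seq_prod (I : Type) (r : seq I) (P : pred I) (F : nat -> I -> R) (L : I -> R) :
  (forall i, is_lim_seq (F^~ i) (L i)) ->
  is_lim_seq (fun m => \prod_(i <- r | P i) F m i) (\prod_(i <- r | P i) L i).
Proof.
by apply: is_lim_seq_big => u v a b u_lim v_lim; exact (is_lim_seq_mult' _ _ _ _ u_lim v_lim).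
Qed.

Definition is_lim_mx k l (M : nat -> 'M[R]_(k, l)) (L : 'M[R]_(k, l)) :=
  forall i j, is_lim_seq (fun m => M m i j) (L i j).

Lemma is_lim_seq_det k (M : nat -> 'M[R]_k) L :
  is_lim_mx M L -> is_lim_seq (fun m => \det (M m)) (\det L).
Proof.
move=> M_lim; apply: is_lim_seq_sum => s.
apply: is_lim_seq_mult'; first exact: is_lim_seq_const.
by apply: is_lim_seq_prod => i; apply: M_lim.
Qed.

Lemma unitmx_det_neq0 k (A : 'M[R]_k) : A \in unitmx -> \det A <> 0.
Proof. by rewrite unitmxE unitfE => /eqP. Qed.

Lemma invmx_coef k (A : 'M[R]_k) i j : A \in unitmx ->
  invmx A i j = Rinv (\det A) * ((-1) ^+ (j + i) * \det (row' j (col' i A))).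
Proof.
by move=> A_unit; rewrite /invmx A_unit !mxE invRE //; apply/eqP; exact: unitmx_det_neq0.
Qed.

Lemma is_lim_mx_invmx k (M : nat -> 'M[R]_k) L :
  (forall m, M m \in unitmx) -> L \in unitmx -> is_lim_mx M L ->
  is_lim_mx (fun m => invmx (M m)) (invmx L).
Proof.
move=> M_unit L_unit M_lim i j; rewrite invmx_coef //.
apply: (is_lim_seq_ext (fun m => Rinv (\det (M m)) *
   ((-1) ^+ (j + i) * \det (row' j (col' i (M m)))))).
  by move=> m; rewrite invmx_coef.
apply: is_lim_seq_mult'.
  apply: (is_lim_seq_inv _ (\det L) (is_lim_seq_det M_lim)).
  by move=> [] /(unitmx_det_neq0 L_unit).
apply: is_lim_seq_mult'; first exact: is_lim_seq_const.
apply: is_lim_seq_det => a b; rewrite !mxE.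
by apply: (is_lim_seq_ext _ _ _ _ (M_lim _ _)) => m; rewrite !mxE.
Qed.

Lemma is_lim_seq_bform k (B : nat -> 'M[R]_k) L u v :
  is_lim_mx B L -> is_lim_seq (fun m => bform (B m) u v) (bform L u v).
Proof.
have bformE (A : 'M[R]_k) : bform A u v = \sum_i (\sum_l u l 0 * A l i) * v i 0.
  by rewrite /bform mxE; apply: eq_bigr => i _; rewrite mxE; congr (_ * _);
     apply: eq_bigr => l _; rewrite mxE.
move=> B_lim; rewrite bformE; apply: (is_lim_seq_ext _ _ _ (fun m => esym (bformE (B m)))).
apply: is_lim_seq_sum => i; apply: is_lim_seq_mult'; last exact: is_lim_seq_const.
apply: is_lim_seq_sum => l; apply: is_lim_seq_mult'; first exact: is_lim_seq_const.
exact: B_lim.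
Qed.

Section Compactness.
Local Open Scope R_scope.

Lemma increasing_selection (Q : nat -> nat -> Prop) :
  (forall N k, exists m, (N <= m)%N /\ Q k m) ->
  exists phi : nat -> nat, (forall k, (phi k < phi k.+1)%N) /\ forall k, Q k (phi k).
Proof.
move=> Q_unbounded.
pose pick N k := proj1_sig (constructive_indefinite_description _ (Q_unbounded N k)).
have pickP N k : (N <= pick N k)%N /\ Q k (pick N k).
  exact: proj2_sig (constructive_indefinite_description _ (Q_unbounded N k)).
pose fix phi k := if k is k'.+1 then pick (phi k').+1 k else pick 0%N 0%N.
exists phi; split=> [k|[|k]]; first exact: (pickP _ k.+1).1.
all: exact: (pickP _ _).2.
Qed.

Lemma is_lim_seq_inv_succ : is_lim_seq (fun k => / INR k.+1) 0.
Proof.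
apply: (is_lim_seq_inv _ p_infty) => //.
by apply/(is_lim_seq_incr_1 INR); exact: is_lim_seq_INR.
Qed.

Lemma bounded_seq_cvg_subseq (v : nat -> R) (a b : R) :
  (forall m, a <= v m <= b) ->
  exists phi : nat -> nat, (forall k, (phi k < phi k.+1)%N) /\
    ex_finite_lim_seq (fun k => v (phi k)).
Proof.
move=> v_bounded.
have [l l_adh] := Bolzano_Weierstrass v _ (compact_P3 a b) v_bounded.
have [phi [phi_incr phi_close]] :
    exists phi : nat -> nat, (forall k, (phi k < phi k.+1)%N) /\
      forall k, Rabs (v (phi k) - l) < / INR k.+1.
  apply: (@increasing_selection (fun k m => Rabs (v m - l) < / INR k.+1)) => N k.
  have eps_gt0 : 0 < / INR k.+1 by apply: Rinv_0_lt_compat; apply: lt_0_INR; lia.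
  have ball_nbhd : neighbourhood (fun z => Rabs (z - l) < / INR k.+1) l.
    by exists (mkposreal _ eps_gt0).
  have [m [/leP N_le_m close]] := l_adh _ N ball_nbhd.
  by exists m.
have inv_lim := is_lim_seq_inv_succ.
exists phi; split=> //; exists l.
apply: (is_lim_seq_le_le (fun k => l - / INR k.+1) _ (fun k => l + / INR k.+1)).
- by move=> k; have /Rabs_def2 := phi_close k; lra.
- by have := is_lim_seq_minus' _ _ _ _ (is_lim_seq_const l) inv_lim; rewrite Rminus_0_r.
- by have := is_lim_seq_plus' _ _ _ _ (is_lim_seq_const l) inv_lim; rewrite Rplus_0_r.
Qed.

Lemma bounded_fam_cvg_subseq (I : finType) (u : nat -> I -> R) (a b : I -> R) :
  (forall m i, a i <= u m i <= b i) ->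
  exists phi : nat -> nat, (forall k, (phi k < phi k.+1)%N) /\
    forall i, ex_finite_lim_seq (fun k => u (phi k) i).
Proof.
move=> u_bounded.
suff [phi [phi_incr phi_cvg]] :
    exists phi : nat -> nat, (forall k, (phi k < phi k.+1)%N) /\
      forall i, i \in enum I -> ex_finite_lim_seq (fun k => u (phi k) i).
  by exists phi; split=> // i; apply: phi_cvg; rewrite mem_enum.
elim: (enum I) => [|i s [phi [phi_incr phi_cvg]]]; first by exists id.
have [psi [psi_incr [l psi_lim]]] := bounded_seq_cvg_subseq (fun m => u_bounded (phi m) i).
exists (phi \o psi); split=> [k|i']; first exact: (homo_ltn ltn_trans phi_incr).
rewrite in_cons => /orP [/eqP -> | i'_in]; first by exists l.
have [l' phi_lim] := phi_cvg i' i'_in; exists l'.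
apply: (is_lim_seq_subseq (fun k => u (phi k) i')) phi_lim.
by apply: eventually_subseq => k; apply/ltP.
Qed.

Lemma is_lub_approx (E : R -> Prop) S eps : is_lub E S -> 0 < eps ->
  exists2 r, E r & S - eps < r.
Proof.
move=> [_ S_lub] eps_gt0; apply: NNPP => no_r; have : S <= S - eps; last lra.
by apply: S_lub => r Er; apply: Rnot_lt_le => r_gt; apply: no_r; exists r.
Qed.

Lemma Theta_attains_max p (f : ('I_p -> R) -> R) (g0 M : 'I_p -> R) :
  in_Theta g0 ->
  (exists B, forall g, in_Theta g -> f g <= B) ->
  (forall g, in_Theta g -> f g0 <= f g -> forall j, g j <= M j) ->
  (forall (G : nat -> 'I_p -> R) L, (forall m, in_Theta (G m)) -> in_Theta L ->
     (forall j, is_lim_seq (fun m => G m j) (L j)) ->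
     is_lim_seq (fun m => f (G m)) (f L)) ->
  exists g, in_Theta g /\ forall g', in_Theta g' -> f g' <= f g.
Proof.
move=> g0_ge0 [B f_le_B] superlevel_bounded f_cont.
pose E r := exists g, in_Theta g /\ r = f g.
have E_bounded : bound E by exists B => _ [g [g_ge0 ->]]; exact: f_le_B.
have E_f_g0 : E (f g0) by exists g0.
have [S S_lub] := @completeness E E_bounded (ex_intro _ _ E_f_g0).
have near_sup m : exists g, in_Theta g /\ S - / INR m.+1 < f g /\ f g0 <= f g.
  have eps_gt0 : 0 < / INR m.+1 by apply: Rinv_0_lt_compat; apply: lt_0_INR; lia.
  have [_ [g [g_ge0 ->]] g_near] := is_lub_approx S_lub eps_gt0.
  have [g0_le|g_lt] := Rle_lt_dec (f g0) (f g); first by exists g.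
  by exists g0; split=> //; split; [lra|exact: Rle_refl].
pose G m := proj1_sig (constructive_indefinite_description _ (near_sup m)).
have G_spec m : in_Theta (G m) /\ S - / INR m.+1 < f (G m) /\ f g0 <= f (G m).
  exact: proj2_sig (constructive_indefinite_description _ (near_sup m)).
have G_ge0 m := (G_spec m).1; have G_near m := (G_spec m).2.1.
have G_super m := (G_spec m).2.2.
have G_bounded m j : 0 <= G m j <= M j.
  by split; [exact: G_ge0 | exact: superlevel_bounded (G_ge0 m) (G_super m) j].
have [phi [phi_incr phi_cvg]] := bounded_fam_cvg_subseq G_bounded.
pose L j := real (Lim_seq (fun k => G (phi k) j)).
have L_lim j : is_lim_seq (fun k => G (phi k) j) (L j) by exact: Lim_seq_correct'.
have L_ge0 : in_Theta L.
  move=> j; have G_lim := L_lim j.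
  exact: is_lim_seq_le _ _ _ _ (fun k => G_ge0 (phi k) j) (is_lim_seq_const 0) G_lim.
have fL_lim := f_cont _ _ (fun k => G_ge0 (phi k)) L_ge0 L_lim.
exists L; split=> // g' g'_ge0.
have inv_lim : is_lim_seq (fun k => / INR (phi k).+1) 0.
  apply: (is_lim_seq_subseq (fun k => / INR k.+1)) is_lim_seq_inv_succ.
  by apply: eventually_subseq => k; apply/ltP.
have := is_lim_seq_minus' _ _ _ _ (is_lim_seq_const S) inv_lim.
rewrite Rminus_0_r => lower_lim.
have : S <= f L.
  by apply: (is_lim_seq_le _ _ _ _ (fun k => Rlt_le _ _ (G_near (phi k))) lower_lim fL_lim).
by have := proj1 S_lub (f g') (ex_intro _ g' (conj g'_ge0 erefl)); lra.
Qed.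

End Compactness.

Section Existence.
Variables (n p : nat) (y : 'cV[R]_n) (X : 'M[R]_(n, p)) (s2 : R).
Hypothesis s2_gt0 : Rlt 0 s2.
Local Open Scope R_scope.

Lemma is_lim_mx_Cgamma (G : nat -> 'I_p -> R) (L : 'I_p -> R) :
  (forall j, is_lim_seq (G^~ j) (L j)) ->
  is_lim_mx (fun m => Cgamma s2 X (G m)) (Cgamma s2 X L).
Proof.
have CgammaE g a b : Cgamma s2 X g a b =
    (s2%:M : 'M_n) a b + \sum_j g j * (col j X *m (col j X)^T) a b.
  by rewrite Cgamma_sum !mxE summxE; congr (_ + _); apply: eq_bigr => j _; rewrite mxE.
move=> G_lim a b; rewrite CgammaE.
apply: (is_lim_seq_ext _ _ _ (fun m => esym (CgammaE (G m) a b))).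
apply: is_lim_seq_plus'; first exact: is_lim_seq_const.
by apply: is_lim_seq_sum => j; exact (is_lim_seq_mult' _ _ _ _ (G_lim j) (is_lim_seq_const _)).
Qed.

Lemma is_lim_seq_loglik (G : nat -> 'I_p -> R) L :
  (forall m, in_Theta (G m)) -> in_Theta L -> (forall j, is_lim_seq (G^~ j) (L j)) ->
  is_lim_seq (fun m => loglik y X s2 (G m)) (loglik y X s2 L).
Proof.
move=> G_ge0 L_ge0 G_lim; have C_lim := is_lim_mx_Cgamma G_lim.
have [_ L_pd detL_gt0] := spd_Cgamma X s2_gt0 L_ge0.
have G_unit m : Cgamma s2 X (G m) \in unitmx.
  by have [_ G_pd _] := spd_Cgamma X s2_gt0 (G_ge0 m); exact: posdef_unit.
rewrite /loglik mxtrace_mul_rank1.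
apply: (is_lim_seq_ext (fun m => - (1 / 2) * ln (\det (Cgamma s2 X (G m)))
   - (1 / 2) * bform (invmx (Cgamma s2 X (G m))) y y)).
  by move=> m; rewrite mxtrace_mul_rank1.
apply: is_lim_seq_minus'; apply: is_lim_seq_mult'; try exact: is_lim_seq_const.
  apply: is_lim_seq_continuous; last exact: is_lim_seq_det.
  by apply/continuity_pt_filterlim; apply: continuous_ln.
by apply: is_lim_seq_bform; apply: is_lim_mx_invmx => //; exact: posdef_unit.
Qed.

Let D0 := \det (s2%:M : 'M[R]_n).
Let q j := bform (invmx (s2%:M : 'M[R]_n)) (col j X) (col j X).

Lemma loglik_le_ln_det g : in_Theta g ->
  loglik y X s2 g <= - (1 / 2) * ln (\det (Cgamma s2 X g)).
Proof.
move=> g_ge0; have [C_sym C_pd _] := spd_Cgamma X s2_gt0 g_ge0.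
have := posdef_ge0 y (posdef_invmx C_sym C_pd).
by rewrite /loglik mxtrace_mul_rank1; lra.
Qed.

Lemma det_Cgamma_ge g j : in_Theta g -> D0 * (1 + g j * q j) <= \det (Cgamma s2 X g).
Proof.
move=> g_ge0; have s2_spd := spd_scalar n s2_gt0.
rewrite Cgamma_sum (bigD1 j) //= addrA.
have [Aj_spd _] := spd_add_rank1 (col j X) s2_spd (g_ge0 j).
have [_ detAj_le] := spd_add_sum_rank1 (predC1 j) (fun k => col k X) Aj_spd g_ge0.
by rewrite det_add_rank1 // in detAj_le; case: s2_spd => _ /posdef_unit.
Qed.

Hypothesis X_neq0 : forall j : 'I_p, col j X <> 0%R.
Let l0 := loglik y X s2 (fun=> 0).

Lemma in_Theta0 : in_Theta (fun _ : 'I_p => 0).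
Proof. by move=> j; exact: Rle_refl. Qed.

Lemma superlevel_coord_le g : in_Theta g -> l0 <= loglik y X s2 g ->
  forall j, g j <= exp (-2 * l0) / (D0 * q j).
Proof.
move=> g_ge0 l0_le j.
have [s2_sym s2_pd D0_gt0] : [/\ _, _ & 0 < D0] := spd_scalar n s2_gt0.
have qj_gt0 : 0 < q j by apply: (posdef_invmx s2_sym s2_pd); apply/eqP.
have gjqj_ge0 := Rmult_le_pos _ _ (g_ge0 j) (Rlt_le _ _ qj_gt0).
have lower_gt0 : 0 < D0 * (1 + g j * q j) by apply: Rmult_lt_0_compat; lra.
have := ln_le _ _ lower_gt0 (det_Cgamma_ge j g_ge0).
have := loglik_le_ln_det g_ge0; set A := D0 * _ => ll_le lnA_le.
have A_le : A <= exp (-2 * l0).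
  rewrite -(exp_ln A lower_gt0).
  by case: (Rle_lt_or_eq_dec (ln A) (-2 * l0)) => [|/exp_increasing|->]; lra.
apply: (Rmult_le_reg_r (D0 * q j)); first exact: Rmult_lt_0_compat.
by rewrite /Rdiv Rmult_assoc Rinv_l ?Rmult_1_r /A in A_le *; nra.
Qed.

Lemma exists_argmax : exists g, is_argmax y X s2 g.
Proof.
apply: (Theta_attains_max in_Theta0 _ superlevel_coord_le); last exact: is_lim_seq_loglik.
have [_ _ D0_gt0] := spd_scalar n s2_gt0.
exists (- (1 / 2) * ln D0) => g g_ge0; rewrite /D0.
have [_ D0_le] := spd_add_sum_rank1 predT (fun k => col k X) (spd_scalar n s2_gt0) g_ge0.
rewrite -Cgamma_sum in D0_le.
by have := ln_le _ _ D0_gt0 D0_le; have := loglik_le_ln_det g_ge0; lra.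
Qed.

End Existence.

Theorem proposition1 (n p : nat) (y : 'cV[R]_n) (X : 'M[R]_(n, p)) (s2 : R)
  (hs2 : Rlt 0 s2) (hX : forall j : 'I_p, col j X <> 0%R) :
  exists g : 'I_p -> R,
    is_argmax y X s2 g /\
    forall j : 'I_p,
      g j = (if Rlt_dec (qx X s2 g j) (qy y X s2 g j ^+ 2)
             then (qy y X s2 g j ^+ 2 - qx X s2 g j) / (qx X s2 g j ^+ 2)
             else 0).
Proof.
have [g g_argmax] := exists_argmax y hs2 hX.
by exists g; split=> // j; exact: argmax_coord.
Qed.
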